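(* Let $\mathcal H$ be a Hilbert space of finite dimension $d$ and $\mathcal K$ a finite-dimensional Hilbert space. Let $\{M_j\}_{j=1}^d$ be positive operators on $\mathcal H$ with $M_j>0$ and $\sum_{j=1}^dM_j=I_{\mathcal H}$, let $\{|e_j\rangle\}_{j=1}^d$ be an orthonormal basis of $\mathcal H$, and let $\Phi$ be the quantum-classical channel $\Phi(\sigma)=\sum_{j=1}^d\mathrm{Tr}(M_j\sigma)|e_j\rangle\langle e_j|$. Then for every quantum channel $\Omega:\mathfrak S(\mathcal K)\to\mathfrak S(\mathcal K)$ and every $\rho\in\mathfrak S(\mathcal H\otimes\mathcal K)$, $$H_{\Phi\otimes\Omega}(\rho)\ge H_\Phi(\mathrm{Tr}_{\mathcal K}(\rho))+H_\Omega(\mathrm{Tr}_{\mathcal H}(\rho)).$$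
   Context: $\mathfrak S(\cdot)$ denotes the set of density operators; a quantum channel is a completely positive trace-preserving linear map; $S(\sigma)=-\mathrm{Tr}(\sigma\log\sigma)$ is the von Neumann entropy. For a channel $\Psi$ with input space $\mathcal L$ and $\sigma\in\mathfrak S(\mathcal L)$, $H_\Psi(\sigma):=\min\sum_{j}\pi_jS(\Psi(\sigma_j))$, the minimum over all finite decompositions $\sigma=\sum_j\pi_j\sigma_j$ with $\{\pi_j\}$ a probability distribution and $\sigma_j\in\mathfrak S(\mathcal L)$. *)

From mathcomp Require Import all_boot all_algebra.
From mathcomp Require Import boolp classical_sets reals exp.
From mathcomp Require Import complex mxtens.

Set Implicit Arguments.
Unset Strict Implicit.
Unset Printing Implicit Defensive.

Import GRing.Theory Num.Theory.
Local Open Scope ring_scope.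

Section QDefs.
Variable R : realType.
Local Notation C := R[i].

Definition adjmx (m n : nat) (A : 'M[C]_(m, n)) : 'M[C]_(n, m) :=
  (map_mx Num.conj A)^T.

Definition psdmx (n : nat) (A : 'M[C]_n) : Prop :=
  forall v : 'cV[C]_n, 0 <= (adjmx v *m A *m v) 0 0.

Definition pdmx (n : nat) (A : 'M[C]_n) : Prop :=
  forall v : 'cV[C]_n, v != 0 -> 0 < (adjmx v *m A *m v) 0 0.

Definition density (n : nat) (A : 'M[C]_n) : Prop :=
  psdmx A /\ \tr A = 1.

Definition linmap (m n : nat) (f : 'M[C]_m -> 'M[C]_n) : Prop :=
  forall (a : C) (x y : 'M[C]_m), f (a *: x + y) = a *: f x + f y.

(* tensor product of two (linear) maps, defined on the product basis
   E_ij (x) E_ab of 'M_(m1*m2), using mxtens_index (i,a) for |i> (x) |a> *)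
Definition tensmap (m1 n1 m2 n2 : nat)
  (f : 'M[C]_m1 -> 'M[C]_n1) (g : 'M[C]_m2 -> 'M[C]_n2)
  (X : 'M[C]_(m1 * m2)) : 'M[C]_(n1 * n2) :=
  \sum_(i < m1) \sum_(j < m1) \sum_(a < m2) \sum_(b < m2)
     X (mxtens_index (i, a)) (mxtens_index (j, b))
       *: (f (delta_mx i j) *t g (delta_mx a b)).

Definition compos (m n : nat) (f : 'M[C]_m -> 'M[C]_n) : Prop :=
  forall (p : nat) (X : 'M[C]_(p * m)),
    psdmx X -> psdmx (tensmap (@id 'M[C]_p) f X).

Definition tracepres (m n : nat) (f : 'M[C]_m -> 'M[C]_n) : Prop :=
  forall X : 'M[C]_m, \tr (f X) = \tr X.

Definition qchannel (m n : nat) (f : 'M[C]_m -> 'M[C]_n) : Prop :=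
  [/\ linmap f, compos f & tracepres f].

Definition eigvals (n : nat) (A : 'M[C]_n) : seq C :=
  xget [::] [set rs : seq C | char_poly A = \prod_(r <- rs) ('X - r%:P)].

(* von Neumann entropy S(s) = - Tr (s log s) = - sum_l l ln l, with 0 ln 0 = 0
   (ln 0 = 0 in mathcomp-analysis); natural logarithm *)
Definition vN_entropy (n : nat) (A : 'M[C]_n) : R :=
  - \sum_(l <- eigvals A) complex.Re l * ln (complex.Re l).

(* H_Psi(sigma) = min over finite decompositions sigma = sum_j pi_j sigma_j of
   sum_j pi_j S(Psi(sigma_j)); stated as the infimum (the min is attained) *)
Definition Hchan (m n : nat) (Psi : 'M[C]_m -> 'M[C]_n) (s : 'M[C]_m) : R :=
  inf [set x : R | exists (N : nat) (pi : 'I_N -> R) (sj : 'I_N -> 'M[C]_m),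
        [/\ forall j, 0 <= pi j,
            \sum_(j < N) pi j = 1,
            forall j, density (sj j),
            s = \sum_(j < N) (Complex (pi j) 0) *: sj j &
            x = \sum_(j < N) pi j * vN_entropy (Psi (sj j))]].

Definition ptraceK (d k : nat) (X : 'M[C]_(d * k)) : 'M[C]_d :=
  \matrix_(i, j) \sum_(a < k) X (mxtens_index (i, a)) (mxtens_index (j, a)).

Definition ptraceH (d k : nat) (X : 'M[C]_(d * k)) : 'M[C]_k :=
  \matrix_(a, b) \sum_(i < d) X (mxtens_index (i, a)) (mxtens_index (i, b)).

Definition qcmap (d : nat) (M : 'I_d -> 'M[C]_d) (e : 'I_d -> 'cV[C]_d)
  (s : 'M[C]_d) : 'M[C]_d :=
  \sum_(j < d) \tr (M j *m s) *: (e j *m adjmx (e j)).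

End QDefs.

From mathcomp Require Import all_boot all_algebra.
From mathcomp Require Import boolp classical_sets reals exp.
From mathcomp Require Import complex mxtens.
From mathcomp Require Import spectral sesquilinear.
From mathcomp Require Import ring.
Import order.Order.POrderTheory GRing.Theory Num.Theory.
Local Open Scope ring_scope.
Local Open Scope complex_scope.
Local Open Scope ring_scope.

Set Implicit Arguments.
Unset Strict Implicit.
Unset Printing Implicit Defensive.

(* Fix a decomposition rho = sum_m pi_m sigma_m into densities. Measuring the
   H-part of sigma_m with {M_l} gives outcome l with probability
   q_ml = Tr (M_l Tr_K sigma_m) and leaves K in the state
   tau_ml = Tr_H ((M_l (x) 1) sigma_m) / q_ml. As the outputs of Phi are
   diagonal in the basis {e_l}, (Phi (x) Omega)(sigma_m) is the block diagonal
   matrix sum_l |e_l><e_l| (x) q_ml Omega(tau_ml), whose entropy splits as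
     S((Phi (x) Omega) sigma_m) = S(Phi (Tr_K sigma_m)) + sum_l q_ml S(Omega tau_ml).
   Averaged over m, the first term is the cost of the decomposition
   {pi_m, Tr_K sigma_m} of Tr_K rho, and the second that of the decomposition
   {pi_m q_ml, tau_ml} of Tr_H rho, since sum_l Tr_H ((M_l (x) 1) sigma) = Tr_H sigma. *)

Lemma sum_mxtens (V : nmodType) m n (F : 'I_(m * n) -> V) :
  \sum_r F r = \sum_i \sum_a F (mxtens_index (i, a)).
Proof.
rewrite (reindex (@mxtens_index m n)) /=; last first.
  by exists (@mxtens_unindex m n) => r _;
     [apply: mxtens_indexK | apply: mxtens_unindexK].
by rewrite pair_big /=; apply: eq_bigr => -[i a].
Qed.

Section TensorProduct.
Variable F : comPzRingType.
Implicit Types (m n p q : nat).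

Lemma tensmxZl m n p q (c : F) (A : 'M[F]_(m, n)) (B : 'M[F]_(p, q)) :
  (c *: A) *t B = c *: (A *t B).
Proof. by apply/matrixP => i j; rewrite !mxE mulrA. Qed.

Lemma tensmxZr m n p q (c : F) (A : 'M[F]_(m, n)) (B : 'M[F]_(p, q)) :
  A *t (c *: B) = c *: (A *t B).
Proof. by apply/matrixP => i j; rewrite !mxE mulrCA. Qed.

Lemma tensmx_suml m n p q (I : finType) (A : I -> 'M[F]_(m, n)) (B : 'M[F]_(p, q)) :
  (\sum_i A i) *t B = \sum_i A i *t B.
Proof.
elim/big_rec2: _ => [|i x y _ <-]; first exact: tens0mx.
by apply/matrixP => r s; rewrite !mxE mulrDl.
Qed.

Lemma tensmx_sumr m n p q (I : finType) (A : 'M[F]_(m, n)) (B : I -> 'M[F]_(p, q)) :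
  A *t (\sum_i B i) = \sum_i A *t B i.
Proof.
elim/big_rec2: _ => [|i x y _ <-]; first exact: tensmx0.
by apply/matrixP => r s; rewrite !mxE mulrDr.
Qed.

Lemma tensmx11 m n : (1%:M : 'M[F]_m) *t (1%:M : 'M[F]_n) = 1%:M.
Proof.
apply/matrixP => r s.
case: (mxtens_indexP r) => i a; case: (mxtens_indexP s) => j b.
rewrite tensmxE !mxE (can_eq (@mxtens_indexK m n)) xpair_eqE.
by case: (i == j); case: (a == b); rewrite ?mulr1 ?mulr0 ?mul0r.
Qed.

Lemma mxtrace_mul_delta n (A : 'M[F]_n) i j : \tr (A *m delta_mx i j) = A j i.
Proof.
rewrite /mxtrace (bigD1 j) //= big1 ?addr0 => [|l /negbTE nl].
  rewrite mxE (bigD1 i) //= big1 ?addr0 => [|l /negbTE nl]; first by rewrite mxE !eqxx mulr1.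
  by rewrite mxE nl mulr0.
by rewrite mxE big1 // => x _; rewrite mxE nl andbF mulr0.
Qed.

Lemma mulmx_blockdiag d k (X Y : 'M[F]_d) (A B : 'I_d -> 'M[F]_k) :
  (\sum_l (X *m delta_mx l l) *t A l) *m (\sum_l (delta_mx l l *m Y) *t B l) =
  \sum_l (X *m delta_mx l l *m Y) *t (A l *m B l).
Proof.
rewrite mulmx_suml; apply: eq_bigr => l _; rewrite mulmx_sumr (bigD1 l) //=.
rewrite big1 ?addr0 => [|l' l'l]; rewrite tensmx_mul -mulmxA.
  by rewrite [delta_mx l l *m _]mulmxA mul_delta_mx mulmxA.
rewrite [delta_mx l l *m _]mulmxA mul_delta_mx_cond eq_sym (negbTE l'l).
by rewrite mulr0n mul0mx mulmx0 tens0mx.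
Qed.

Lemma mulmx_delta_diagE n p q (A : 'M[F]_(p, n)) (B : 'M[F]_(n, q)) l i j :
  (A *m delta_mx l l *m B) i j = A i l * B l j.
Proof.
by rewrite -(mul_delta_mx (0 : 'I_1)) mulmxA -colE -mulmxA -rowE !mxE big_ord1 !mxE.
Qed.

End TensorProduct.

Lemma char_poly_similar (F : comNzRingType) n (G G' T : 'M[F]_n) :
  G *m G' = 1%:M -> char_poly (G *m T *m G') = char_poly T.
Proof.
move=> GG'; rewrite /char_poly /char_poly_mx.
set Gp := map_mx polyC G; set Gp' := map_mx polyC G'.
have GGp : Gp *m Gp' = 1%:M by rewrite -map_mxM GG' map_mx1.
have -> : 'X%:M - map_mx polyC (G *m T *m G') =
    Gp *m ('X%:M - map_mx polyC T) *m Gp'.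
  rewrite !map_mxM mulmxBr mulmxBl -/Gp -/Gp' scalar_mxC.
  by rewrite -[X in _ = X - _]mulmxA GGp mulmx1.
rewrite !det_mulmx mulrC mulrA -det_mulmx (mulmx1C GGp).
by rewrite det1 mul1r.
Qed.

Section PositiveOperators.
Variable R : realType.
Local Notation C := R[i].
Implicit Types (m n : nat).

Lemma adjmxE m n (A : 'M[C]_(m, n)) : adjmx A = (A ^t*)%sesqui.
Proof. by rewrite /adjmx map_trmx. Qed.

Lemma adjmxK m n (A : 'M[C]_(m, n)) : adjmx (adjmx A) = A.
Proof. by apply/matrixP => i j; rewrite !mxE conjCK. Qed.

Lemma adjmxM m n p (A : 'M[C]_(m, n)) (B : 'M[C]_(n, p)) :
  adjmx (A *m B) = adjmx B *m adjmx A.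
Proof.
apply/matrixP => i j; rewrite !mxE rmorph_sum; apply: eq_bigr => l _.
by rewrite !mxE rmorphM mulrC.
Qed.

Lemma adjmxD m n (A B : 'M[C]_(m, n)) : adjmx (A + B) = adjmx A + adjmx B.
Proof. by apply/matrixP => i j; rewrite !mxE rmorphD. Qed.

Lemma adjmxZ m n (c : C) (A : 'M[C]_(m, n)) : adjmx (c *: A) = c^* *: adjmx A.
Proof. by apply/matrixP => i j; rewrite !mxE rmorphM. Qed.

Lemma adjmx_delta m n (i : 'I_m) (j : 'I_n) :
  adjmx (delta_mx i j : 'M[C]_(m, n)) = delta_mx j i.
Proof.
apply/matrixP => a b; rewrite !mxE.
by case: (b == i); case: (a == j); rewrite /= ?rmorph1 ?rmorph0.
Qed.

Lemma qformE n (A : 'M[C]_n) (v : 'cV[C]_n) :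
  (adjmx v *m A *m v) 0 0 = \sum_i \sum_j (v i 0)^* * A i j * v j 0.
Proof.
rewrite mxE (eq_bigr (fun j => (\sum_i (v i 0)^* * A i j) * v j 0)); last first.
  by move=> j _; rewrite !mxE; congr (_ * _); apply: eq_bigr => i _; rewrite !mxE.
rewrite exchange_big /=; apply: eq_bigr => i _.
by rewrite mulr_suml; apply: eq_bigr => j _.
Qed.

Lemma qform_sum n (I : finType) (B : I -> 'M[C]_n) (v : 'cV[C]_n) :
  (adjmx v *m (\sum_i B i) *m v) 0 0 = \sum_i (adjmx v *m B i *m v) 0 0.
Proof. by rewrite mulmx_sumr mulmx_suml summxE. Qed.

Lemma qformZ n (c : C) (B : 'M[C]_n) (v : 'cV[C]_n) :
  (adjmx v *m (c *: B) *m v) 0 0 = c * (adjmx v *m B *m v) 0 0.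
Proof. by rewrite -scalemxAr -scalemxAl mxE. Qed.

Lemma qform_delta n (A : 'M[C]_n) p q :
  adjmx (delta_mx p 0 : 'cV[C]_n) *m A *m (delta_mx q 0 : 'cV[C]_n) = (A p q)%:M.
Proof.
apply/matrixP => a b; rewrite !ord1 [RHS]mxE eqxx mulr1n.
by rewrite adjmx_delta -rowE -colE !mxE.
Qed.

Lemma qform_adjmx n (A : 'M[C]_n) (v : 'cV[C]_n) :
  (adjmx v *m adjmx A *m v) 0 0 = ((adjmx v *m A *m v) 0 0)^*.
Proof.
have -> : adjmx v *m adjmx A *m v = adjmx (adjmx v *m A *m v).
  by rewrite !adjmxM adjmxK mulmxA.
by rewrite /adjmx [LHS]mxE [LHS]mxE.
Qed.

Lemma qform_eq0 n (B : 'M[C]_n) :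
  (forall v : 'cV[C]_n, (adjmx v *m B *m v) 0 0 = 0) -> B = 0.
Proof.
move=> Q0; have diag0 p : B p p = 0.
  by have := Q0 (delta_mx p 0); rewrite qform_delta mxE eqxx mulr1n.
apply/matrixP => i j; rewrite mxE.
(* Polarization: test the form on [e_i + c e_j] for [c = 1] and [c = 'i]. *)
pose w (c : C) : 'cV[C]_n := delta_mx i 0 + c *: delta_mx j 0.
have Qw (c : C) : c * B i j + c^* * B j i = 0.
  have := Q0 (w c); rewrite adjmxD adjmxZ !mulmxDl !mulmxDr -!scalemxAl.
  rewrite -!scalemxAr !qform_delta !mxE !eqxx !mulr1n !diag0 => <-; ring.
have := Qw 1; have := Qw 'i; rewrite conjCi rmorph1 !mul1r => Qi Q1.
have : 2 * B i j = 0.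
  have ii : 'i * 'i = -1 :> C by rewrite -expr2 sqrCi.
  have -> : 2 * B i j = (B i j + B j i) - 'i * ('i * B i j + - 'i * B j i)
                        + ('i * 'i + 1) * (B i j - B j i) by ring.
  by rewrite Q1 Qi ii addNr !mulr0 mul0r subr0 addr0.
by move/eqP; rewrite mulf_eq0 pnatr_eq0 => /eqP.
Qed.

Lemma psdmx_row_ge0 n (A : 'M[C]_n) (u : 'rV[C]_n) :
  psdmx A -> 0 <= (u *m A *m adjmx u) 0 0.
Proof. by move=> /(_ (adjmx u)); rewrite adjmxK. Qed.

Lemma psdmx_herm n (A : 'M[C]_n) : psdmx A -> adjmx A = A.
Proof.
move=> psdA; apply/eqP; rewrite -subr_eq0; apply/eqP/qform_eq0 => v.
rewrite mulmxBr mulmxBl [LHS]mxE [X in _ + X = _]mxE qform_adjmx.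
by have /ger0_real/CrealP -> := psdA v; rewrite subrr.
Qed.

Lemma mulmx_adjmx_diag m n (X : 'M[C]_(m, n)) (A : 'M[C]_n) i :
  (X *m A *m adjmx X) i i = (row i X *m A *m adjmx (row i X)) 0 0.
Proof.
have -> : adjmx (row i X) = col i (adjmx X) by apply/matrixP => a b; rewrite !mxE.
by rewrite -row_mul !mxE; apply: eq_bigr => l _; rewrite !mxE.
Qed.

Lemma psdmx_spectral n (A : 'M[C]_n) : psdmx A ->
  exists (P : 'M[C]_n) (lam : 'rV[C]_n),
  [/\ P *m adjmx P = 1%:M, adjmx P *m P = 1%:M,
      A = adjmx P *m diag_mx lam *m P & forall i, 0 <= lam 0 i].
Proof.
move=> psdA; have hA := psdmx_herm psdA.
have /orthomx_spectralP eA : A \is normalmx.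
  by apply/normalmxP; rewrite -adjmxE hA.
set P := spectralmx A in eA; set lam := spectral_diag A in eA.
have uP : P *m adjmx P = 1%:M.
  by rewrite adjmxE; apply/unitarymxP; apply: spectral_unitarymx.
have iP : invmx P = adjmx P.
  by rewrite adjmxE invmx_unitary //; apply: spectral_unitarymx.
rewrite iP in eA; exists P, lam; split => //; first exact: mulmx1C.
move=> i; have <- : (P *m A *m adjmx P) i i = lam 0 i.
  by rewrite eA !mulmxA uP mul1mx -mulmxA uP mulmx1 !mxE eqxx mulr1n.
by rewrite mulmx_adjmx_diag psdmx_row_ge0.
Qed.

Lemma mxtrace_diag_mul n (lam : 'rV[C]_n) (B : 'M[C]_n) :
  \tr (diag_mx lam *m B) = \sum_i lam 0 i * B i i.
Proof. by rewrite mul_diag_mx /mxtrace; apply: eq_bigr => i _; rewrite mxE. Qed.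

Lemma psdmx_mxtrace_mul_ge0 n (A B : 'M[C]_n) :
  psdmx A -> psdmx B -> 0 <= \tr (A *m B).
Proof.
move=> /psdmx_spectral [P [lam [u1 u2 -> lam0]]] psdB.
rewrite -!mulmxA mxtrace_mulC !mulmxA -2![X in \tr X]mulmxA mxtrace_diag_mul.
apply: sumr_ge0 => i _; apply: mulr_ge0 => //.
by rewrite mulmxA mulmx_adjmx_diag psdmx_row_ge0.
Qed.

Lemma psdmx_tr0 n (A : 'M[C]_n) : psdmx A -> \tr A = 0 -> A = 0.
Proof.
move=> /psdmx_spectral [P [lam [u1 u2 eA lam0]]] tr0.
suff lam_eq0 : lam = 0 by rewrite eA lam_eq0 linear0 mulmx0 mul0mx.
have : \sum_i lam 0 i = 0.
  by rewrite -[RHS]tr0 eA mxtrace_mulC mulmxA u1 mul1mx mxtrace_diag.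
move=> /psumr_eq0P lam_i0; apply/matrixP => a i; rewrite ord1 mxE.
by apply: lam_i0.
Qed.

Lemma psdmx0 n : psdmx (0 : 'M[C]_n).
Proof. by move=> v; rewrite mulmx0 mul0mx mxE. Qed.

Lemma psdmxD n (A B : 'M[C]_n) : psdmx A -> psdmx B -> psdmx (A + B).
Proof. by move=> pA pB v; rewrite mulmxDr mulmxDl mxE addr_ge0. Qed.

Lemma psdmxZ n (c : C) (A : 'M[C]_n) : 0 <= c -> psdmx A -> psdmx (c *: A).
Proof. by move=> c0 pA v; rewrite -scalemxAr -scalemxAl mxE mulr_ge0. Qed.

Lemma psdmx_sum n (I : finType) (F : I -> 'M[C]_n) :
  (forall i, psdmx (F i)) -> psdmx (\sum_i F i).
Proof. by move=> psdF; elim/big_ind: _ => //; [apply: psdmx0 | apply: psdmxD]. Qed.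

Lemma pdmx_psdmx n (A : 'M[C]_n) : pdmx A -> psdmx A.
Proof.
move=> pA v; have [->|vn] := eqVneq v 0; first by rewrite mulmx0 mxE.
exact: ltW (pA v vn).
Qed.

Lemma psdmx_tr_ge0 n (A : 'M[C]_n) : psdmx A -> 0 <= \tr A.
Proof.
move=> pA; apply: sumr_ge0 => i _.
by have := pA (delta_mx i 0); rewrite qform_delta mxE eqxx mulr1n.
Qed.

Lemma psdmx_mul_adjmx m n (A : 'M[C]_(m, n)) : psdmx (A *m adjmx A).
Proof.
move=> v; rewrite mulmxA -mulmxA.
have -> : adjmx A *m v = adjmx (adjmx v *m A) by rewrite adjmxM adjmxK.
by rewrite mxE; apply: sumr_ge0 => i _; rewrite !mxE mul_conjC_ge0.
Qed.

End PositiveOperators.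

Section Entropy.
Variable R : realType.
Local Notation C := R[i].

Lemma ge0_RealE (z : C) : 0 <= z -> z = (complex.Re z)%:C.
Proof. by case: z => a b; rewrite lecE /= => /andP[/eqP -> _]. Qed.

Lemma Re_le (z w : C) : z <= w -> complex.Re z <= complex.Re w.
Proof. by rewrite lecE => /andP[]. Qed.

Lemma Re_ge0 (z : C) : 0 <= z -> 0 <= complex.Re z.
Proof. exact: Re_le. Qed.

Lemma ReD (z w : C) : complex.Re (z + w) = complex.Re z + complex.Re w.
Proof. by case: z; case: w. Qed.

Lemma Re_sum (I : Type) (r : seq I) (P : pred I) (F : I -> C) :
  complex.Re (\sum_(i <- r | P i) F i) = \sum_(i <- r | P i) complex.Re (F i).
Proof. by elim/big_rec2: _ => // i x y _ <-; rewrite ReD. Qed.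

Lemma ReM_ge0 (z w : C) : 0 <= z -> 0 <= w ->
  complex.Re (z * w) = complex.Re z * complex.Re w.
Proof.
move=> /ge0_RealE -> /ge0_RealE ->.
by rewrite /= !mulr0 subr0.
Qed.

Definition xlnx (z : C) : R := complex.Re z * ln (complex.Re z).

Lemma xlnx_le0 (z : C) : 0 <= z -> z <= 1 -> xlnx z <= 0.
Proof.
by move=> /Re_ge0 z0 /Re_le z1; apply: mulr_ge0_le0 => //; apply: ln_le0.
Qed.

Lemma xlnxM (z w : C) : 0 <= z -> 0 <= w ->
  xlnx (z * w) = complex.Re w * xlnx z + complex.Re z * xlnx w.
Proof.
move=> z0 w0; rewrite /xlnx ReM_ge0 //.
have [->|zn] := eqVneq (complex.Re z) 0; first by rewrite !(mul0r, mulr0, add0r).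
have [->|wn] := eqVneq (complex.Re w) 0; first by rewrite !(mul0r, mulr0, addr0).
rewrite lnM ?posrE ?lt0r ?zn ?wn ?Re_ge0 //; ring.
Qed.

Lemma vN_entropy_roots n (A : 'M[C]_n) (s : seq C) :
  char_poly A = \prod_(r <- s) ('X - r%:P) ->
  vN_entropy A = - \sum_(r <- s) xlnx r.
Proof.
move=> hs; rewrite /vN_entropy /eigvals; set E := xget _ _.
have hE : char_poly A = \prod_(r <- E) ('X - r%:P).
  by apply: (xgetPex [::] (P := [set rs | char_poly A = \prod_(r <- rs) ('X - r%:P)]));
     exists s.
have pE : perm_eq E s by apply: prod_XsubC_eq; rewrite -hE hs.
by rewrite (perm_big _ pE).
Qed.

Lemma vN_entropy_trig n (G G' T : 'M[C]_n) : G *m G' = 1%:M -> is_trig_mx T ->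
  vN_entropy (G *m T *m G') = - \sum_i xlnx (T i i).
Proof.
move=> GG' tT; rewrite (@vN_entropy_roots _ _ [seq T i i | i <- enum 'I_n]).
  by rewrite big_map big_enum.
by rewrite char_poly_similar // char_poly_trig // big_map big_enum.
Qed.

Lemma vN_entropy_diag n (G G' : 'M[C]_n) (lam : 'rV[C]_n) : G *m G' = 1%:M ->
  vN_entropy (G *m diag_mx lam *m G') = - \sum_i xlnx (lam 0 i).
Proof.
move=> GG'; rewrite vN_entropy_trig ?diag_mx_is_trig //.
by congr (- _); apply: eq_bigr => i _; rewrite mxE eqxx mulr1n.
Qed.

Lemma density_spectral n (A : 'M[C]_n) : density A ->
  exists (P : 'M[C]_n) (lam : 'rV[C]_n),
  [/\ adjmx P *m P = 1%:M, A = adjmx P *m diag_mx lam *m P,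
      forall i, 0 <= lam 0 i, \sum_i lam 0 i = 1 &
      vN_entropy A = - \sum_i xlnx (lam 0 i)].
Proof.
move=> [/psdmx_spectral [P [lam [u1 u2 eA lam0]]] trA].
exists P, lam; split => //; last by rewrite eA vN_entropy_diag.
by rewrite -trA eA mxtrace_mulC mulmxA u1 mul1mx mxtrace_diag.
Qed.

Lemma vN_entropy_ge0 n (A : 'M[C]_n) : density A -> 0 <= vN_entropy A.
Proof.
move=> /density_spectral [P [lam [_ _ lam0 sum_lam ->]]].
rewrite oppr_ge0; apply: sumr_le0 => i _.
apply: xlnx_le0 => //; rewrite -sum_lam (bigD1 i) //= lerDl.
exact: sumr_ge0.
Qed.

End Entropy.

Section LinearMaps.
Variable R : realType.
Local Notation C := R[i].
Variables (m n : nat) (f : 'M[C]_m -> 'M[C]_n).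
Hypothesis linf : linmap f.

Lemma linmap0 : f 0 = 0.
Proof.
have := linf 1 0 0; rewrite !scale1r addr0 => f0.
by apply: (addrI (f 0)); rewrite addr0 -f0.
Qed.

Lemma linmapD x y : f (x + y) = f x + f y.
Proof. by have := linf 1 x y; rewrite !scale1r. Qed.

Lemma linmapZ (c : C) x : f (c *: x) = c *: f x.
Proof. by have := linf c x 0; rewrite !addr0 linmap0 addr0. Qed.

Lemma linmap_sum (I : finType) (F : I -> 'M[C]_m) : f (\sum_i F i) = \sum_i f (F i).
Proof. by elim/big_rec2: _ => [|i x y _ <-]; [apply: linmap0 | apply: linmapD]. Qed.

Lemma linmap_expand X : f X = \sum_a \sum_b X a b *: f (delta_mx a b).
Proof.
rewrite {1}(matrix_sum_delta X) linmap_sum; apply: eq_bigr => a _.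
by rewrite linmap_sum; apply: eq_bigr => b _; rewrite linmapZ.
Qed.

End LinearMaps.

Section PartialTraces.
Variable R : realType.
Local Notation C := R[i].
Variables d k : nat.
Implicit Types (X : 'M[C]_(d * k)) (v : 'cV[C]_k).

Definition tblock X (i j : 'I_d) : 'M[C]_k :=
  \matrix_(a, b) X (mxtens_index (i, a)) (mxtens_index (j, b)).

(* [wptraceH A X] is [Tr_H ((A (x) 1) X)]. *)
Definition wptraceH (A : 'M[C]_d) X : 'M[C]_k :=
  \sum_i \sum_j A j i *: tblock X i j.

(* [pqform v X] is [(1 (x) v)^* X (1 (x) v)]. *)
Definition pqform v X : 'M[C]_d :=
  \matrix_(i, j) (adjmx v *m tblock X i j *m v) 0 0.

Lemma ptraceKE X i j : ptraceK X i j = \tr (tblock X i j).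
Proof. by rewrite mxE; apply: eq_bigr => a _; rewrite mxE. Qed.

Lemma ptraceHE X : ptraceH X = \sum_i tblock X i i.
Proof. by apply/matrixP => a b; rewrite mxE summxE; apply: eq_bigr => i _; rewrite mxE. Qed.

Lemma qform_tens X (w : 'cV[C]_(d * k)) :
  (adjmx w *m X *m w) 0 0 = \sum_i \sum_a \sum_j \sum_b
    (w (mxtens_index (i, a)) 0)^* * X (mxtens_index (i, a)) (mxtens_index (j, b))
      * w (mxtens_index (j, b)) 0.
Proof.
rewrite qformE sum_mxtens; apply: eq_bigr => i _; apply: eq_bigr => a _.
exact: sum_mxtens.
Qed.

Lemma psdmx_pqform v X : psdmx X -> psdmx (pqform v X).
Proof.
move=> psdX u.
pose w : 'cV[C]_(d * k) := \col_r (u (mxtens_unindex r).1 0 * v (mxtens_unindex r).2 0).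
suff -> : (adjmx u *m pqform v X *m u) 0 0 = (adjmx w *m X *m w) 0 0 by [].
rewrite qform_tens qformE; apply: eq_bigr => i _.
rewrite exchange_big; apply: eq_bigr => j _.
rewrite mxE qformE mulr_sumr mulr_suml; apply: eq_bigr => a _.
rewrite mulr_sumr mulr_suml; apply: eq_bigr => b _.
by rewrite !mxE !mxtens_indexK /= rmorphM; ring.
Qed.

Lemma ptraceK_pqform X : ptraceK X = \sum_a pqform (delta_mx a 0) X.
Proof.
apply/matrixP => i j; rewrite ptraceKE summxE; apply: eq_bigr => a _.
by rewrite [RHS]mxE qform_delta !mxE eqxx mulr1n.
Qed.

Lemma psdmx_ptraceK X : psdmx X -> psdmx (ptraceK X).
Proof.
by move=> psdX; rewrite ptraceK_pqform; apply: psdmx_sum => a; apply: psdmx_pqform.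
Qed.

Lemma mxtrace_ptraceK X : \tr (ptraceK X) = \tr X.
Proof. by rewrite /mxtrace sum_mxtens; apply: eq_bigr => i _; rewrite mxE. Qed.

Lemma qform_wptraceH (A : 'M[C]_d) X v :
  (adjmx v *m wptraceH A X *m v) 0 0 = \tr (A *m pqform v X).
Proof.
rewrite qform_sum; under eq_bigr => i _ do rewrite qform_sum.
rewrite exchange_big; apply: eq_bigr => j _; rewrite mxE; apply: eq_bigr => i _.
by rewrite qformZ [in RHS]mxE.
Qed.

Lemma psdmx_wptraceH (A : 'M[C]_d) X : psdmx A -> psdmx X -> psdmx (wptraceH A X).
Proof.
move=> psdA psdX v; rewrite qform_wptraceH.
by apply: psdmx_mxtrace_mul_ge0 => //; apply: psdmx_pqform.
Qed.

Lemma mxtrace_wptraceH (A : 'M[C]_d) X : \tr (wptraceH A X) = \tr (A *m ptraceK X).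
Proof.
rewrite raddf_sum; under eq_bigr => i _ do rewrite raddf_sum.
rewrite exchange_big; apply: eq_bigr => j _; rewrite mxE; apply: eq_bigr => i _.
by rewrite /= mxtraceZ ptraceKE.
Qed.

Lemma sum_wptraceH (M : 'I_d -> 'M[C]_d) X :
  \sum_l M l = 1%:M -> \sum_l wptraceH (M l) X = ptraceH X.
Proof.
move=> sumM; rewrite /wptraceH ptraceHE exchange_big; apply: eq_bigr => i _.
rewrite exchange_big (bigD1 i) //= [X in _ + X]big1 => [|j ji].
  by rewrite -scaler_suml -summxE sumM mxE eqxx scale1r addr0.
by rewrite -scaler_suml -summxE sumM mxE (negbTE ji) scale0r.
Qed.

Lemma ptraceK_lincomb N (c : 'I_N -> C) (X : 'I_N -> 'M[C]_(d * k)) :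
  ptraceK (\sum_j c j *: X j) = \sum_j c j *: ptraceK (X j).
Proof.
apply/matrixP => i i'; rewrite !mxE summxE.
under eq_bigr => a _ do rewrite summxE.
rewrite exchange_big; apply: eq_bigr => j _; rewrite !mxE mulr_sumr.
by apply: eq_bigr => a _; rewrite mxE.
Qed.

Lemma ptraceH_lincomb N (c : 'I_N -> C) (X : 'I_N -> 'M[C]_(d * k)) :
  ptraceH (\sum_j c j *: X j) = \sum_j c j *: ptraceH (X j).
Proof.
apply/matrixP => i i'; rewrite !mxE summxE.
under eq_bigr => a _ do rewrite summxE.
rewrite exchange_big; apply: eq_bigr => j _; rewrite !mxE mulr_sumr.
by apply: eq_bigr => a _; rewrite mxE.
Qed.

Lemma tensmap_tblock m (f : 'M[C]_d -> 'M[C]_m) (g : 'M[C]_k -> 'M[C]_k) X :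
  linmap g -> tensmap f g X = \sum_i \sum_j f (delta_mx i j) *t g (tblock X i j).
Proof.
move=> ling; apply: eq_bigr => i _; apply: eq_bigr => j _.
rewrite (linmap_expand ling) tensmx_sumr; apply: eq_bigr => a _.
by rewrite tensmx_sumr; apply: eq_bigr => b _; rewrite tensmxZr mxE.
Qed.

End PartialTraces.

Section Channels.
Variable R : realType.
Local Notation C := R[i].

Lemma qform_tens_delta k (Y : 'M[C]_k) (w : 'cV[C]_(1 * k)) :
  (adjmx w *m (delta_mx 0 0 *t Y) *m w) 0 0 =
  (adjmx (\col_a w (mxtens_index (ord0, a)) 0) *m Y *m \col_a w (mxtens_index (ord0, a)) 0) 0 0.
Proof.
rewrite qform_tens qformE big_ord1; apply: eq_bigr => a _.
rewrite big_ord1; apply: eq_bigr => b _.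
by rewrite tensmxE !mxE mulr1n mul1r.
Qed.

Lemma psdmx_tens_delta k (Y : 'M[C]_k) :
  psdmx (delta_mx 0 0 *t Y : 'M[C]_(1 * k)) <-> psdmx Y.
Proof.
split=> [psdT v | psdY w]; last by rewrite qform_tens_delta.
pose w : 'cV[C]_(1 * k) := \col_r v (mxtens_unindex r).2 0.
have := psdT w; rewrite qform_tens_delta.
suff -> : \col_a w (mxtens_index (ord0, a)) 0 = v by [].
by apply/matrixP => a b; rewrite !mxE mxtens_indexK [b]ord1.
Qed.

Lemma compos_psdmx k (f : 'M[C]_k -> 'M[C]_k) : linmap f -> compos f ->
  forall X, psdmx X -> psdmx (f X).
Proof.
move=> linf cpf X /psdmx_tens_delta /(cpf 1%N).
rewrite tensmap_tblock // !big_ord1 => /psdmx_tens_delta.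
suff -> : tblock (delta_mx 0 0 *t X : 'M[C]_(1 * k)) ord0 ord0 = X by [].
by apply/matrixP => a b; rewrite !mxE !mxtens_indexK /= mulr1n mul1r.
Qed.

Lemma qchannel_density k (f : 'M[C]_k -> 'M[C]_k) : qchannel f ->
  forall X, density X -> density (f X).
Proof.
by move=> [linf cpf trf] X [psdX trX]; split; [apply: compos_psdmx | rewrite trf].
Qed.

End Channels.

Section QuantumClassical.
Variable R : realType.
Local Notation C := R[i].
Variables (d : nat) (e : 'I_d -> 'cV[C]_d).
Hypothesis e_orthonormal : forall i j : 'I_d, adjmx (e i) *m e j = (i == j)%:R%:M.

Definition basismx : 'M[C]_d := \matrix_(i, l) e l i 0.

Lemma adjmx_basismx_mul : adjmx basismx *m basismx = 1%:M.
Proof.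
apply/matrixP => l l'; have /matrixP /(_ 0 0) := e_orthonormal l l'.
by rewrite !mxE eqxx mulr1n => <-; apply: eq_bigr => i _; rewrite !mxE.
Qed.

Lemma basismx_mul_adjmx : basismx *m adjmx basismx = 1%:M.
Proof. exact: mulmx1C adjmx_basismx_mul. Qed.

Lemma proj_basismx l : e l *m adjmx (e l) = basismx *m delta_mx l l *m adjmx basismx.
Proof. by apply/matrixP => i j; rewrite mulmx_delta_diagE !mxE big_ord1 !mxE. Qed.

Lemma vN_entropy_qcsum (c : 'I_d -> C) :
  vN_entropy (\sum_l c l *: (e l *m adjmx (e l))) = - \sum_l xlnx (c l).
Proof.
have -> : \sum_l c l *: (e l *m adjmx (e l)) =
    basismx *m diag_mx (\row_l c l) *m adjmx basismx.
  apply/matrixP => i j; rewrite summxE mul_mx_diag !mxE.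
  by apply: eq_bigr => l _; rewrite [LHS]mxE proj_basismx mulmx_delta_diagE !mxE; ring.
rewrite vN_entropy_diag ?basismx_mul_adjmx //.
by congr (- _); apply: eq_bigr => l _; rewrite mxE.
Qed.

Lemma vN_entropy_blockdiag k (c : 'I_d -> C) (V : 'I_d -> 'M[C]_k) (lam : 'I_d -> 'rV[C]_k) :
  (forall l, adjmx (V l) *m V l = 1%:M) ->
  vN_entropy (\sum_l (e l *m adjmx (e l)) *t
                (c l *: (adjmx (V l) *m diag_mx (lam l) *m V l))) =
  - \sum_l \sum_a xlnx (c l * lam l 0 a).
Proof.
move=> unitV.
pose G := \sum_l (basismx *m delta_mx l l) *t adjmx (V l).
pose G' := \sum_l (delta_mx l l *m adjmx basismx) *t V l.
pose t : 'rV[C]_(d * k) := \row_r (c (mxtens_unindex r).1 *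
   lam (mxtens_unindex r).1 0 (mxtens_unindex r).2).
have GG' : G *m G' = 1%:M.
  rewrite mulmx_blockdiag; under eq_bigr => l _ do rewrite unitV.
  rewrite -tensmx_suml -mulmx_suml -mulmx_sumr -mx1_sum_delta mulmx1.
  by rewrite basismx_mul_adjmx tensmx11.
have diag_t : diag_mx t = \sum_l (delta_mx l l *m 1%:M) *t (c l *: diag_mx (lam l)).
  apply/matrixP => r s.
  case: (mxtens_indexP r) => i a; case: (mxtens_indexP s) => j b.
  rewrite summxE (bigD1 i) //= big1 ?addr0 => [|l /negbTE li]; last first.
    by rewrite mulmx1 tensmxE !mxE eq_sym li mul0r.
  rewrite mulmx1 tensmxE !mxE !mxtens_indexK (can_eq (@mxtens_indexK d k)) xpair_eqE.
  rewrite eqxx /= eq_sym.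
  by case: (j == i); case: (a == b); rewrite /= ?mulr1n ?mulr0n ?mul1r ?mulr1 ?mulr0 ?mul0r.
have -> : \sum_l (e l *m adjmx (e l)) *t
    (c l *: (adjmx (V l) *m diag_mx (lam l) *m V l)) = G *m diag_mx t *m G'.
  symmetry; rewrite diag_t /G mulmx_blockdiag; under eq_bigr => l _ do rewrite mulmx1.
  rewrite /G' mulmx_blockdiag; apply: eq_bigr => l _.
  by rewrite proj_basismx -scalemxAr -scalemxAl.
rewrite vN_entropy_diag //; congr (- _).
by rewrite sum_mxtens; apply: eq_bigr => l _; apply: eq_bigr => a _;
   rewrite !mxE !mxtens_indexK.
Qed.

End QuantumClassical.

Section MinimalOutputEntropy.
Variable R : realType.
Local Notation C := R[i].

Definition decomposition m N (s : 'M[C]_m) (pi : 'I_N -> R) (sj : 'I_N -> 'M[C]_m) :=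
  [/\ forall j, 0 <= pi j, \sum_j pi j = 1, forall j, density (sj j) &
      s = \sum_j Complex (pi j) 0 *: sj j].

Lemma Hchan_le m n (Psi : 'M[C]_m -> 'M[C]_n) s N (pi : 'I_N -> R) sj :
  (forall X, density X -> 0 <= vN_entropy (Psi X)) -> decomposition s pi sj ->
  Hchan Psi s <= \sum_j pi j * vN_entropy (Psi (sj j)).
Proof.
move=> Psi_ge0 [pi0 sum_pi dsj ->]; apply: ge_inf.
  exists 0 => _ [N' [pi' [sj' [pi'0 _ dsj' _ ->]]]].
  by apply: sumr_ge0 => j _; apply: mulr_ge0 => //; apply: Psi_ge0.
by exists N, pi, sj.
Qed.

Lemma le_Hchan m n (Psi : 'M[C]_m -> 'M[C]_n) s (y : R) : density s ->
  (forall N (pi : 'I_N -> R) sj, decomposition s pi sj ->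
     y <= \sum_j pi j * vN_entropy (Psi (sj j))) ->
  y <= Hchan Psi s.
Proof.
move=> ds le_y; apply: lb_le_inf => [|_ [N [pi [sj [pi0 sum_pi dsj es ->]]]]].
  exists (\sum_(j < 1) 1 * vN_entropy (Psi s)), 1%N, (fun=> 1), (fun=> s).
  by split=> [_||_||]; rewrite ?big_ord1 ?scale1r ?ler01.
exact: le_y.
Qed.

Lemma decomposition_ptraceK d k N (rho : 'M[C]_(d * k)) (pi : 'I_N -> R) sj :
  decomposition rho pi sj -> decomposition (ptraceK rho) pi (fun j => ptraceK (sj j)).
Proof.
move=> [pi0 sum_pi dsj ->]; split=> //; last exact: ptraceK_lincomb.
by move=> j; have [psds trs] := dsj j; split; [apply: psdmx_ptraceK | rewrite mxtrace_ptraceK].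
Qed.

End MinimalOutputEntropy.

Section Measurement.
Variable R : realType.
Local Notation C := R[i].
Variables (d k : nat) (M : 'I_d -> 'M[C]_d) (e : 'I_d -> 'cV[C]_d).
Hypothesis psdM : forall l, psdmx (M l).
Hypothesis sumM : \sum_l M l = 1%:M.
Hypothesis e_orthonormal : forall i j : 'I_d, adjmx (e i) *m e j = (i == j)%:R%:M.
Implicit Types (s : 'M[C]_(d * k)) (l : 'I_d).

Definition outcome_prob s l : C := \tr (M l *m ptraceK s).

(* When outcome [l] has probability zero any density will do: we take [ptraceH s]. *)
Definition post_state s l : 'M[C]_k :=
  if outcome_prob s l == 0 then ptraceH s
  else (outcome_prob s l)^-1 *: wptraceH (M l) s.

Lemma outcome_prob_ge0 s l : density s -> 0 <= outcome_prob s l.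
Proof.
move=> [psds _]; rewrite /outcome_prob -mxtrace_wptraceH.
exact/psdmx_tr_ge0/psdmx_wptraceH.
Qed.

Lemma sum_outcome_prob s : density s -> \sum_l outcome_prob s l = 1.
Proof.
move=> [_ trs]; rewrite -raddf_sum /= -mulmx_suml sumM mul1mx.
by rewrite mxtrace_ptraceK.
Qed.

Lemma density_ptraceH s : density s -> density (ptraceH s).
Proof.
move=> ds; have [psds _] := ds; rewrite -(sum_wptraceH s sumM); split.
  by apply: psdmx_sum => l; apply: psdmx_wptraceH.
rewrite raddf_sum -(sum_outcome_prob ds); apply: eq_bigr => l _.
exact: mxtrace_wptraceH.
Qed.

Lemma wptraceH_post_state s l : density s ->
  wptraceH (M l) s = outcome_prob s l *: post_state s l.
Proof.
move=> ds; have [psds _] := ds; rewrite /post_state.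
have [q0|qn0] := eqVneq (outcome_prob s l) 0.
  rewrite q0 scale0r; apply: psdmx_tr0; first exact: psdmx_wptraceH.
  by rewrite mxtrace_wptraceH.
by rewrite scalerA mulfV // scale1r.
Qed.

Lemma density_post_state s l : density s -> density (post_state s l).
Proof.
move=> ds; have [psds _] := ds; rewrite /post_state.
have [q0|qn0] := eqVneq (outcome_prob s l) 0; first exact: density_ptraceH.
split; last by rewrite mxtraceZ mxtrace_wptraceH mulVf.
apply: psdmxZ; last exact: psdmx_wptraceH.
by rewrite invr_ge0 outcome_prob_ge0.
Qed.

Lemma qcmap_delta i j :
  qcmap M e (delta_mx i j) = \sum_l M l j i *: (e l *m adjmx (e l)).
Proof. by apply: eq_bigr => l _; rewrite mxtrace_mul_delta. Qed.

Lemma density_qcmap X : density X -> density (qcmap M e X).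
Proof.
move=> [psdX trX]; split.
  apply: psdmx_sum => l; apply: psdmxZ; last exact: psdmx_mul_adjmx.
  exact: psdmx_mxtrace_mul_ge0.
rewrite raddf_sum -trX -[in RHS](mul1mx X) -sumM mulmx_suml raddf_sum.
apply: eq_bigr => l _; rewrite /= mxtraceZ [\tr (e l *m _)]mxtrace_mulC e_orthonormal eqxx.
by rewrite mxtrace_scalar mulr1.
Qed.

Lemma tensmap_qcmap (g : 'M[C]_k -> 'M[C]_k) s : linmap g ->
  tensmap (qcmap M e) g s = \sum_l (e l *m adjmx (e l)) *t g (wptraceH (M l) s).
Proof.
move=> ling; rewrite tensmap_tblock //.
under eq_bigr => i _ do under eq_bigr => j _ do rewrite qcmap_delta tensmx_suml.
under eq_bigr => i _ do rewrite exchange_big.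
rewrite exchange_big; apply: eq_bigr => l _.
rewrite linmap_sum // tensmx_sumr; apply: eq_bigr => i _.
by rewrite linmap_sum // tensmx_sumr; apply: eq_bigr => j _; rewrite linmapZ // tensmxZr tensmxZl.
Qed.

Lemma vN_entropy_tensmap_qcmap (Omega : 'M[C]_k -> 'M[C]_k) s :
  qchannel Omega -> density s ->
  vN_entropy (tensmap (qcmap M e) Omega s) =
  vN_entropy (qcmap M e (ptraceK s)) +
  \sum_l complex.Re (outcome_prob s l) * vN_entropy (Omega (post_state s l)).
Proof.
move=> chO ds; have [linO _ _] := chO.
have dO l : density (Omega (post_state s l)).
  exact/(qchannel_density chO)/density_post_state.
have [V /fin_all_exists [lam hlam]] :=
  fin_all_exists (fun l => density_spectral (dO l)).
have chain l : - \sum_a xlnx (outcome_prob s l * lam l 0 a) =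
    - xlnx (outcome_prob s l) +
    complex.Re (outcome_prob s l) * vN_entropy (Omega (post_state s l)).
  have [_ _ lam0 sum_lam ->] := hlam l.
  under eq_bigr => a _ do rewrite xlnxM ?outcome_prob_ge0 //.
  by rewrite big_split /= -mulr_suml -Re_sum sum_lam mul1r -mulr_sumr; ring.
rewrite tensmap_qcmap //.
under eq_bigr => l _ do rewrite wptraceH_post_state // linmapZ //.
under eq_bigr => l _ do have [_ -> _ _ _] := hlam l.
rewrite vN_entropy_blockdiag //; last by move=> l; have [] := hlam l.
rewrite vN_entropy_qcsum // -sumrN; under eq_bigr => l _ do rewrite chain.
by rewrite big_split /= sumrN.
Qed.

Lemma decomposition_ptraceH N (rho : 'M[C]_(d * k)) (pi : 'I_N -> R) sj :
  decomposition rho pi sj ->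
  decomposition (ptraceH rho)
    (fun r => pi (mxtens_unindex r).1 *
              complex.Re (outcome_prob (sj (mxtens_unindex r).1) (mxtens_unindex r).2))
    (fun r => post_state (sj (mxtens_unindex r).1) (mxtens_unindex r).2).
Proof.
move=> [pi0 sum_pi dsj ->]; split.
- move=> r; apply: mulr_ge0 => //.
  exact/Re_ge0/outcome_prob_ge0.
- rewrite sum_mxtens -sum_pi; apply: eq_bigr => m _.
  under eq_bigr => l _ do rewrite mxtens_indexK.
  by rewrite /= -mulr_sumr -Re_sum sum_outcome_prob // mulr1.
- by move=> r; apply: density_post_state.
rewrite ptraceH_lincomb sum_mxtens; apply: eq_bigr => m _.
rewrite -(sum_wptraceH (sj m) sumM) scaler_sumr; apply: eq_bigr => l _.
rewrite mxtens_indexK /= wptraceH_post_state // scalerA.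
have /ge0_RealE {1}-> := outcome_prob_ge0 l (dsj m).
by congr (_ *: _); apply/eqP; rewrite eq_complex /= !(mulr0, mul0r, subr0, addr0) !eqxx.
Qed.

End Measurement.

Theorem theorem5 (R : realType) (d k : nat)
  (M : 'I_d -> 'M[R[i]]_d) (e : 'I_d -> 'cV[R[i]]_d)
  (HMpos : forall j, pdmx (M j))
  (HMsum : \sum_(j < d) M j = 1%:M)
  (Heon : forall i j : 'I_d, adjmx (e i) *m e j = (i == j)%:R%:M)
  (Omega : 'M[R[i]]_k -> 'M[R[i]]_k) (HOmega : qchannel Omega)
  (rho : 'M[R[i]]_(d * k)) (Hrho : density rho) :
  Hchan (qcmap M e) (ptraceK rho) + Hchan Omega (ptraceH rho)
    <= Hchan (tensmap (qcmap M e) Omega) rho.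
Proof.
have psdM l : psdmx (M l) := pdmx_psdmx (HMpos l).
apply: le_Hchan => // N pi sj dec; have [_ _ dsj _] := dec.
under eq_bigr => m _ do rewrite vN_entropy_tensmap_qcmap // mulrDr.
rewrite big_split /=; apply: lerD.
  apply: Hchan_le (decomposition_ptraceK dec) => X dX.
  exact/vN_entropy_ge0/density_qcmap.
have Omega_ge0 X : density X -> 0 <= vN_entropy (Omega X).
  by move=> dX; apply/vN_entropy_ge0/qchannel_density.
apply: le_trans (Hchan_le Omega_ge0 (decomposition_ptraceH psdM HMsum dec)) _.
rewrite sum_mxtens; apply: ler_sum => m _; rewrite mulr_sumr; apply: ler_sum => l _.
by rewrite mxtens_indexK /= mulrA lexx.
Qed.
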